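(* Let $\Bbbk$ be a field and let $B$ be a filtered bialgebra over $\Bbbk$ (filtration $B_0\subset B_1\subset\cdots$, $\bigcup_nB_n=B$). Suppose chosen subspaces $B(0):=B_0$ and, for $i\ge0$, $B(i+1)\subset\operatorname{Ker}\epsilon$ with $B_{i+1}=B_i\oplus B(i+1)$, and suppose $C\subset B$ is a basis of $B$ such that: $1\in C$; $xy\in C$ for all $x,y\in C$; every element of $C$ lies in some $B(n)$; for every $x\in C$, $\Delta(x)$ is a sum of terms $a\otimes b$ with $a,b\in C$; and for every $x\in C\cap B(n)$ the projections $\Delta_{0,n}(x)$ and $\Delta_{n,0}(x)$ of $\Delta(x)$ onto $B(0)\otimes B(n)$ and $B(n)\otimes B(0)$ are of the form $\Delta_{0,n}(x)=\operatorname{in}(x)\otimes x$ and $\Delta_{n,0}(x)=x\otimes\operatorname{out}(x)$ with $\operatorname{in}(x),\operatorname{out}(x)\in C$ group-like. Let $C_0:=C\cap B_0$. Then for all $x,y\in C$, if $xy\in C_0$ then $x\in C_0$ and $y\in C_0$.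
   Context: A filtered bialgebra is a bialgebra $(B,m,1,\Delta,\epsilon)$ with an increasing sequence of subspaces $B_0\subset B_1\subset\cdots$, $\bigcup_n B_n=B$, such that $1\in B_0$, $B_iB_j\subset B_{i+j}$ and $\Delta(B_n)\subset\sum_{i+j=n}B_i\otimes B_j$. An element $x\ne0$ is group-like if $\Delta(x)=x\otimes x$. *)

From HB Require Import structures.
From mathcomp Require Import all_boot all_order all_algebra.
Set Implicit Arguments. Unset Strict Implicit. Unset Printing Implicit Defensive.
Import GRing.Theory.
Local Open Scope ring_scope.

Section BialgDefs.
Variables (K : fieldType) (B : algType K).

Definition subspace (S : B -> Prop) :=
  S 0 /\ forall (k : K) u v, S u -> S v -> S (k *: u + v).

(* Elements of B (x) B are represented by finite formal sums
   sum_i a_i (x) b_i, i.e. by lists of pairs.  Two such lists represent the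
   same tensor iff every bilinear form B x B -> K takes the same value on
   them (over a field, bilinear forms separate the points of B (x) B). *)
Definition bilin (phi : B -> B -> K) :=
  (forall b (k : K) u v, phi (k *: u + v) b = k * phi u b + phi v b) /\
  (forall a (k : K) u v, phi a (k *: u + v) = k * phi a u + phi a v).

Definition teq (s t : seq (B * B)) :=
  forall phi, bilin phi ->
    \sum_(p <- s) phi p.1 p.2 = \sum_(p <- t) phi p.1 p.2.

Definition trilin (phi : B -> B -> B -> K) :=
  [/\ (forall b c (k : K) u v, phi (k *: u + v) b c = k * phi u b c + phi v b c),
      (forall a c (k : K) u v, phi a (k *: u + v) c = k * phi a u c + phi a v c) &
      (forall a b (k : K) u v, phi a b (k *: u + v) = k * phi a b u + phi a b v)].

Definition teq3 (s t : seq (B * B * B)) :=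
  forall phi, trilin phi ->
    \sum_(p <- s) phi p.1.1 p.1.2 p.2 = \sum_(p <- t) phi p.1.1 p.1.2 p.2.

Definition tscale (k : K) (s : seq (B * B)) := [seq (k *: p.1, p.2) | p <- s].
Definition tmul (s t : seq (B * B)) :=
  [seq (p.1 * q.1, p.2 * q.2) | p <- s, q <- t].

Variables (Delta : B -> seq (B * B)) (eps : B -> K).

Definition Delta_l (s : seq (B * B)) : seq (B * B * B) :=
  flatten [seq [seq (q.1, q.2, p.2) | q <- Delta p.1] | p <- s].
Definition Delta_r (s : seq (B * B)) : seq (B * B * B) :=
  flatten [seq [seq (p.1, q.1, q.2) | q <- Delta p.2] | p <- s].

Definition is_bialgebra :=
  (forall (k : K) u v, eps (k *: u + v) = k * eps u + eps v) /\
  eps 1 = 1 /\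
  (forall x y, eps (x * y) = eps x * eps y) /\
  (forall (k : K) u v, teq (Delta (k *: u + v)) (tscale k (Delta u) ++ Delta v)) /\
  teq (Delta 1) [:: (1, 1)] /\
  (forall x y, teq (Delta (x * y)) (tmul (Delta x) (Delta y))) /\
  (forall x, teq3 (Delta_l (Delta x)) (Delta_r (Delta x))) /\
  (forall x, \sum_(p <- Delta x) eps p.1 *: p.2 = x) /\
  (forall x, \sum_(p <- Delta x) eps p.2 *: p.1 = x).

Definition grouplike (x : B) := x != 0 /\ teq (Delta x) [:: (x, x)].

Definition is_filtration (Bf : nat -> B -> Prop) :=
  (forall n, subspace (Bf n)) /\
  (forall n b, Bf n b -> Bf n.+1 b) /\
  (forall b, exists n, Bf n b) /\
  Bf 0%N 1 /\
  (forall i j a b, Bf i a -> Bf j b -> Bf (i + j)%N (a * b)) /\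
  (forall n x, Bf n x -> exists s, teq (Delta x) s /\
     forall p, p \in s -> exists i j, (i + j = n)%N /\ Bf i p.1 /\ Bf j p.2).

Definition is_complements (Bf Bc : nat -> B -> Prop) :=
  (forall n, subspace (Bc n)) /\
  (forall b, Bc 0%N b <-> Bf 0%N b) /\
  (forall i b, Bc i.+1 b -> eps b = 0) /\
  (forall i b, Bf i.+1 b <-> exists u v, Bf i u /\ Bc i.+1 v /\ b = u + v) /\
  (forall i b, Bf i b -> Bc i.+1 b -> b = 0).

Definition is_basis (C : B -> Prop) :=
  (forall b, exists s : seq (K * B),
     (forall p, p \in s -> C p.2) /\ b = \sum_(p <- s) p.1 *: p.2) /\
  (forall (s : seq B) (c : B -> K), uniq s -> (forall x, x \in s -> C x) ->
     \sum_(x <- s) c x *: x = 0 -> forall x, x \in s -> c x = 0).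

(* tcomp Bc i j t u : the component of the tensor t in B(i) (x) B(j), with
   respect to B (x) B = (+)_{k,l} B(k) (x) B(l), equals the tensor u. *)
Definition tcomp (Bc : nat -> B -> Prop) (i j : nat) (t u : seq (B * B)) :=
  (forall p, p \in u -> Bc i p.1 /\ Bc j p.2) /\
  exists s, teq t (u ++ s) /\
    forall p, p \in s -> exists k l, (k, l) <> (i, j) /\ Bc k p.1 /\ Bc l p.2.

End BialgDefs.

(* Let z := xy, a basis element of B_0.  The (0,0)-component of Delta(z) is
   z (x) out(z), and every other component of Delta(z) is killed by the
   bilinear form a (x) b |-> eps(a) * [coefficient of z in b]: on B(k) (x) B(l)
   with k > 0 because B(k) lies in Ker eps, and on B(0) (x) B(l) with l > 0
   because the basis C splits along B = B_0 (+) (sum_{j>0} B(j)).  The counit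
   axiom then gives 1 = eps(z) * [coefficient of z in out(z)], so
   eps(x) eps(y) = eps(z) <> 0; as every basis element outside B_0 lies in some
   B(j+1), which is contained in Ker eps, x and y lie in B_0. *)

From HB Require Import structures.
From mathcomp Require Import all_boot all_order all_algebra boolp.
Set Implicit Arguments. Unset Strict Implicit. Unset Printing Implicit Defensive.
Import GRing.Theory.
Local Open Scope ring_scope.

Section Subspace.
Variables (K : fieldType) (B : algType K) (S : B -> Prop).
Hypothesis S_subspace : subspace S.

Lemma subspace0 : S 0.
Proof. exact: S_subspace.1. Qed.

Lemma subspaceD u v : S u -> S v -> S (u + v).
Proof. by move=> Su Sv; have := S_subspace.2 1 u v Su Sv; rewrite scale1r. Qed.

Lemma subspaceZ k u : S u -> S (k *: u).
Proof. by move=> Su; have := S_subspace.2 k u 0 Su subspace0; rewrite addr0. Qed.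

Lemma subspaceB u v : S u -> S v -> S (u - v).
Proof. by move=> Su Sv; rewrite -scaleN1r addrC; apply: S_subspace.2. Qed.

Lemma subspace_sum (I : eqType) (r : seq I) (P : pred I) (F : I -> B) :
  (forall i, i \in r -> P i -> S (F i)) -> S (\sum_(i <- r | P i) F i).
Proof.
move=> SF; rewrite big_seq_cond; apply: (big_ind S) => //.
- exact: subspace0.
- by move=> u v; apply: subspaceD.
- by move=> i /andP[ir Pi]; apply: SF.
Qed.

End Subspace.

Section Coordinates.
Variables (K : fieldType) (B : algType K) (C : B -> Prop).
Hypothesis C_basis : is_basis C.

Definition combination (s : seq (K * B)) : B := \sum_(p <- s) p.1 *: p.2.

Definition coef (c : B) (s : seq (K * B)) : K := \sum_(p <- s | p.2 == c) p.1.

Lemma coef_eq0 c s :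
  (forall p, p \in s -> C p.2) -> combination s = 0 -> coef c s = 0.
Proof.
move=> sC s0; set L := undup [seq p.2 | p <- s].
have sL p : p \in s -> p.2 \in L by move=> ps; rewrite mem_undup map_f.
have [cL|cNL] := boolP (c \in L); last first.
  rewrite /coef big1_seq // => p /andP[/eqP pc ps].
  by move: cNL; rewrite -pc sL.
apply: (C_basis.2 L (coef^~ s)) => //; first exact: undup_uniq.
  by move=> b; rewrite mem_undup => /mapP[p ps ->]; apply: sC.
rewrite -[RHS]s0 /combination /coef.
under eq_bigr do rewrite big_mkcond scaler_suml /=.
rewrite exchange_big; apply: eq_big_seq => p ps /=.
rewrite (bigD1_seq p.2) ?undup_uniq ?sL //= eqxx big1 ?addr0 // => b pb.
by rewrite eq_sym (negPf pb) scale0r.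
Qed.

Lemma coef_eq c s t :
  (forall p, p \in s -> C p.2) -> (forall p, p \in t -> C p.2) ->
  combination s = combination t -> coef c s = coef c t.
Proof.
move=> sC tC st; apply/eqP; rewrite -subr_eq0; apply/eqP.
have := @coef_eq0 c (s ++ [seq (- p.1, p.2) | p <- t]).
rewrite /coef /combination !big_cat !big_map /= sumrN; apply.
  by move=> p; rewrite mem_cat => /orP[/sC | /mapP[q /tC qC ->]].
under [X in _ + X]eq_bigr do rewrite scaleNr.
by rewrite sumrN; move: st; rewrite /combination => ->; rewrite subrr.
Qed.

Definition expansion (b : B) : seq (K * B) := sval (cid (C_basis.1 b)).

Lemma expansion_basis b p : p \in expansion b -> C p.2.
Proof. exact: (svalP (cid (C_basis.1 b))).1. Qed.

Lemma combination_expansion b : combination (expansion b) = b.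
Proof. exact/esym/(svalP (cid (C_basis.1 b))).2. Qed.

Definition coord (c b : B) : K := coef c (expansion b).

Lemma coordE c s b :
  (forall p, p \in s -> C p.2) -> combination s = b -> coord c b = coef c s.
Proof.
move=> sC sb; apply: coef_eq => //; first exact: expansion_basis.
by rewrite combination_expansion.
Qed.

Lemma coordZD c k u v : coord c (k *: u + v) = k * coord c u + coord c v.
Proof.
rewrite (coordE c (s := [seq (k * p.1, p.2) | p <- expansion u] ++ expansion v)).
- by rewrite /coef big_cat big_map mulr_sumr.
- move=> p; rewrite mem_cat => /orP[/mapP[q qu ->] | /expansion_basis //].
  exact: expansion_basis qu.
rewrite -[in RHS](combination_expansion u) -[in RHS](combination_expansion v).
rewrite /combination big_cat big_map scaler_sumr /=.
by congr (_ + _); apply: eq_bigr => p _; rewrite scalerA.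
Qed.

Lemma coord0 c : coord c 0 = 0.
Proof. by rewrite (coordE c (s := [::])) //; apply: big_nil. Qed.

Lemma coord_sum c (I : Type) (r : seq I) (a : I -> K) (F : I -> B) :
  coord c (\sum_(i <- r) a i *: F i) = \sum_(i <- r) a i * coord c (F i).
Proof.
elim: r => [|i r IHr]; first by rewrite !big_nil coord0.
by rewrite !big_cons coordZD IHr.
Qed.

Lemma coord_basis c b : C b -> coord c b = (b == c)%:R.
Proof.
move=> Cb; rewrite (coordE c (s := [:: (1, b)])).
- by rewrite /coef big_mkcond big_seq1 /=; case: (b == c).
- by move=> p; rewrite mem_seq1 => /eqP ->.
by rewrite /combination big_seq1 scale1r.
Qed.

End Coordinates.

Lemma seq_exists_bounded (T : eqType) (P : nat -> T -> Prop) (s : seq T) :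
  (forall u, u \in s -> exists j, P j u) ->
  exists n, forall u, u \in s -> exists2 j, (j < n)%N & P j u.
Proof.
elim: s => [|u s IHs] sP; first by exists 0%N.
have [j Pj] := sP u (mem_head u s).
have [n Hn] := IHs (fun w ws => sP w (mem_behead (ws : w \in behead (u :: s)))).
exists (maxn j.+1 n) => w; rewrite inE => /orP[/eqP -> | /Hn[i ilt Pi]].
  by exists j; rewrite // leq_max leqnn.
by exists i; rewrite // leq_max ilt orbT.
Qed.

Section Filtration.
Variables (K : fieldType) (B : algType K) (Bf Bc : nat -> B -> Prop).
Hypothesis Bf_subspace : forall n, subspace (Bf n).
Hypothesis Bc_subspace : forall n, subspace (Bc n).
Hypothesis Bf_mono : forall n b, Bf n b -> Bf n.+1 b.
Hypothesis Bc_sub_Bf : forall n b, Bc n b -> Bf n b.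
Hypothesis Bf_Bc_eq0 : forall n b, Bf n b -> Bc n.+1 b -> b = 0.

Lemma Bf_leq m n b : (m <= n)%N -> Bf m b -> Bf n b.
Proof.
elim: n => [|n IHn]; first by rewrite leqn0 => /eqP ->.
by rewrite leq_eqVlt => /orP[/eqP -> // | mn bm]; apply/Bf_mono/IHn.
Qed.

Lemma sum_complements_B0_eq0 n (s : seq B) :
  (forall u, u \in s -> exists2 j, (j < n)%N & Bc j.+1 u) ->
  Bf 0 (\sum_(u <- s) u) -> \sum_(u <- s) u = 0.
Proof.
elim: n s => [|n IHn] s sBc s0; first by rewrite big_seq big1 // => u /sBc[].
have below u : u \in s -> ~ Bc n.+1 u -> exists2 j, (j < n)%N & Bc j.+1 u.
  move=> us uNtop; have [j] := sBc u us; rewrite ltnS leq_eqVlt.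
  by case/orP=> [/eqP jn | jn] Bj; [rewrite jn in Bj | exists j].
rewrite (bigID (fun u => `[< Bc n.+1 u >])) /= in s0 *.
set t := \sum_(u <- s | _) u in s0 *; set r := \sum_(u <- s | _) u in s0 *.
have t_top : Bc n.+1 t by apply: subspace_sum => // u _ /asboolP.
have r_Bf : Bf n r.
  apply: subspace_sum => // u us /asboolP/(below u us)[j jn Bj].
  exact: Bf_leq jn (Bc_sub_Bf Bj).
have t0 : t = 0.
  apply: Bf_Bc_eq0 t_top; rewrite -(addrK r t).
  exact: subspaceB (Bf_leq (leq0n n) s0) r_Bf.
move: s0; rewrite t0 !add0r /r -big_filter; apply: IHn => u.
by rewrite mem_filter => /andP[/asboolP uNtop us]; apply: below.
Qed.

Definition Bplus (v : B) : Prop :=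
  exists2 s : seq B, (forall u, u \in s -> exists j, Bc j.+1 u)
                   & v = \sum_(u <- s) u.

Lemma Bplus_subspace : subspace Bplus.
Proof.
split; first by exists [::]; rewrite ?big_nil.
move=> k u v [s sBc ->] [t tBc ->].
exists ([seq k *: w | w <- s] ++ t); last by rewrite big_cat big_map scaler_sumr.
move=> w; rewrite mem_cat => /orP[/mapP[w' /sBc[j Bj] ->] | /tBc //].
by exists j; apply: subspaceZ.
Qed.

Lemma Bplus_complement j v : Bc j.+1 v -> Bplus v.
Proof.
move=> Bv; exists [:: v]; last by rewrite big_seq1.
by move=> u; rewrite mem_seq1 => /eqP ->; exists j.
Qed.

Lemma Bplus_B0_eq0 v : Bplus v -> Bf 0 v -> v = 0.
Proof.
move=> [s sBc ->].
have [n Hn] := seq_exists_bounded (P := fun j u => Bc j.+1 u) sBc.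
exact: sum_complements_B0_eq0 Hn.
Qed.

Variable C : B -> Prop.
Hypothesis C_basis : is_basis C.
Hypothesis C_graded : forall c, C c -> Bf 0 c \/ exists j, Bc j.+1 c.

Lemma coord_Bplus c v : Bf 0 c -> Bplus v -> coord C_basis c v = 0.
Proof.
move=> c0 v_plus; set s := expansion C_basis v.
pose P (p : K * B) := `[< Bf 0 p.2 >].
set u := \sum_(p <- s | P p) p.1 *: p.2.
set w := \sum_(p <- s | ~~ P p) p.1 *: p.2.
have v_split : v = u + w.
  by rewrite -{1}(combination_expansion C_basis v) /combination (bigID P).
have w_plus : Bplus w.
  apply: (subspace_sum Bplus_subspace) => p ps /asboolPn pN0.
  apply: (subspaceZ Bplus_subspace).
  have [//|[j Bj]] := C_graded (expansion_basis ps).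
  exact: Bplus_complement Bj.
have u0 : u = 0.
  apply: Bplus_B0_eq0.
    by rewrite -(addrK w u) -v_split; apply: (subspaceB Bplus_subspace).
  by apply: subspace_sum => // p _ /asboolP p0; apply: subspaceZ.
rewrite (coordE C_basis c (s := [seq p <- s | ~~ P p])); last first.
- by rewrite v_split u0 add0r /combination big_filter.
- by move=> p; rewrite mem_filter => /andP[_ /expansion_basis].
rewrite /coef big1_seq // => p /andP[/eqP pc].
by rewrite mem_filter => /andP[/asboolPn]; rewrite pc.
Qed.

Variables (Delta : B -> seq (B * B)) (eps : B -> K).
Hypothesis eps_linear : forall k u v, eps (k *: u + v) = k * eps u + eps v.
Hypothesis counit : forall x, \sum_(p <- Delta x) eps p.1 *: p.2 = x.
Hypothesis eps_Bc : forall i b, Bc i.+1 b -> eps b = 0.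

Lemma eps_basis_B0_neq0 z g :
  C z -> Bf 0 z -> tcomp Bc 0 0 (Delta z) [:: (z, g)] -> eps z != 0.
Proof.
move=> Cz z0 [_ [s [Dz s_off]]].
pose phi a b := eps a * coord C_basis z b.
have phi_bilin : bilin phi.
  by split=> [b k u v | a k u v]; rewrite /phi ?eps_linear ?coordZD;
     rewrite ?mulrDl ?mulrDr ?mulrA // [eps a * k]mulrC.
have := Dz phi phi_bilin.
rewrite /phi -coord_sum counit coord_basis // eqxx mulr1n big_cat big_seq1 /=.
rewrite big1_seq ?addr0 => [one|p /andP[_ /s_off[k [l [kl [pk pl]]]]]].
  by apply/eqP => ez; move: one; rewrite ez mul0r; apply/eqP; apply: oner_neq0.
case: k kl pk => [|k] kl pk; last by rewrite (eps_Bc pk) mul0r.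
case: l kl pl => [//|l] _ pl.
by rewrite (coord_Bplus z0 (Bplus_complement pl)) mulr0.
Qed.

End Filtration.

Theorem lemma4p2 (K : fieldType) (B : algType K)
  (Delta : B -> seq (B * B)) (eps : B -> K)
  (Bf Bc : nat -> B -> Prop) (C : B -> Prop) :
  is_bialgebra Delta eps ->
  is_filtration Delta Bf ->
  is_complements eps Bf Bc ->
  is_basis C ->
  C 1 ->
  (forall x y, C x -> C y -> C (x * y)) ->
  (forall x, C x -> exists n, Bc n x) ->
  (forall x, C x -> exists s, teq (Delta x) s /\
      forall p, p \in s -> C p.1 /\ C p.2) ->
  (forall n x, C x -> Bc n x ->
     (exists g, C g /\ grouplike Delta g /\ tcomp Bc 0%N n (Delta x) [:: (g, x)]) /\
     (exists g, C g /\ grouplike Delta g /\ tcomp Bc n 0%N (Delta x) [:: (x, g)])) ->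
  forall x y, C x -> C y -> (C (x * y) /\ Bf 0%N (x * y)) ->
    (C x /\ Bf 0%N x) /\ (C y /\ Bf 0%N y).
Proof.
move=> [eps_linear [_ [epsM [_ [_ [_ [_ [counit _]]]]]]]]
  [Bf_subspace [Bf_mono _]] [Bc_subspace [Bc0 [eps_Bc [Bf_succ Bf_Bc_eq0]]]]
  C_basis _ _ C_Bc _ C_out x y Cx Cy [Cxy xy0].
have Bc_sub_Bf n b : Bc n b -> Bf n b.
  case: n => [/Bc0 // | n Bb]; apply/Bf_succ; exists 0, b.
  by rewrite add0r; split=> //; apply: subspace0.
have C_graded c : C c -> Bf 0 c \/ exists j, Bc j.+1 c.
  by move=> /C_Bc[[|j] Bj]; [left; apply/Bc0 | right; exists j].
have eps_B0 c : C c -> eps c != 0 -> Bf 0 c.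
  by move=> /C_graded[// | [j /eps_Bc ->]]; rewrite eqxx.
have [_ [g [_ [_ xy_out]]]] := C_out 0%N _ Cxy (proj2 (Bc0 _) xy0).
have := eps_basis_B0_neq0 Bf_subspace Bc_subspace Bf_mono Bc_sub_Bf Bf_Bc_eq0
  C_basis C_graded eps_linear counit eps_Bc Cxy xy0 xy_out.
rewrite epsM mulf_eq0 negb_or => /andP[ex ey].
by split; split=> //; apply: eps_B0.
Qed.
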